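(* Let $n\ge 3$, $0<m<\frac{n-2}{n}$, $\rho>0$, and let $\alpha,\beta$ satisfy $\alpha=\frac{2\beta+\rho}{1-m}$, $\beta>\frac{m\rho}{n-2-mn}$, and $\alpha>n\beta$. Let $v$ be a radially symmetric solution of $$\frac{n-1}{m}\Delta v^m+\alpha v+\beta x\cdot\nabla v=0,\quad v>0,\quad\text{in }\mathbb{R}^n$$ (equivalently, a solution of the corresponding radial ODE on $(0,\infty)$ with $v(0)=\eta>0$, $v'(0)=0$). Then $$\lim_{r\to\infty}r^{n-2}v(r)^m=\infty.$$
   Context: $v(r)$ denotes the value of the radially symmetric function $v$ at any point with $|x|=r$. *)

From Stdlib Require Import Reals.
From Coquelicot Require Import Coquelicot.
Open Scope R_scope.

Definition vpow (v : R -> R) (m : R) : R -> R := fun r => Rpower (v r) m.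

(* v is a radially symmetric solution of
     (n-1)/m * Delta (v^m) + alpha v + beta x . grad v = 0,  v > 0  in R^n,
   written as the radial ODE on (0,oo): for w = v^m,
     (n-1)/m * (w'' + (n-1)/r w') + alpha v + beta r v' = 0,
   with v(0) = eta > 0 and v'(0) = 0.  The function v : R -> R is only
   relevant on [0,oo); differentiability at 0 with v'(0)=0 is stated for
   v on R (any solution on [0,oo) extends evenly). *)
Definition radial_solution (n : nat) (m alpha beta eta : R) (v : R -> R) : Prop :=
  (forall r, 0 <= r -> 0 < v r) /\
  v 0 = eta /\
  (forall r, 0 <= r -> ex_derive v r) /\
  Derive v 0 = 0 /\
  (forall r, 0 < r -> ex_derive (vpow v m) r /\ ex_derive (Derive (vpow v m)) r) /\
  (forall r, 0 < r ->
     (INR n - 1) / m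
       * (Derive (Derive (vpow v m)) r + (INR n - 1) / r * Derive (vpow v m) r)
     + alpha * v r + beta * r * Derive v r = 0).

From Stdlib Require Import Reals Lra Lia.
From Coquelicot Require Import Coquelicot.
Open Scope R_scope.

(* With [w = v ^ m] and [h = alpha v + beta r v'], the quantity
   [alpha w + (beta / m) r w' = (w / v) h] has, by the equation, a positive derivative at
   each of its zeros; it is positive near [0] because [v 0 > 0], hence positive from some
   [xi] on. So [h > 0] there, [r ^ (alpha / beta) v] is nondecreasing, and
   [r ^ (n - 2) v ^ m >= c r ^ (n - 2 - m alpha / beta)]; the exponent is positive because
   the lower bound on [beta] is equivalent to [m alpha < beta (n - 2)]. *)

Lemma continuity_pt_locally_gt (f : R -> R) (c y0 : R) :
  continuity_pt f c -> y0 < f c ->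
  exists d, 0 < d /\ forall y, Rabs (y - c) < d -> y0 < f y.
Proof.
  intros Hc Hgt.
  destruct (Hc (f c - y0)) as [d [Hd Hball]]; [lra|].
  exists d; split; [exact Hd|]; intros y Hy.
  destruct (Req_dec y c) as [->|Hne]; [exact Hgt|].
  assert (Hfy : Rabs (f y - f c) < f c - y0).
  { apply Hball; split; [split; [exact I|congruence]|exact Hy]. }
  apply Rabs_lt_between in Hfy; lra.
Qed.

Lemma continuity_pt_locally_lt (f : R -> R) (c y0 : R) :
  continuity_pt f c -> f c < y0 ->
  exists d, 0 < d /\ forall y, Rabs (y - c) < d -> f y < y0.
Proof.
  intros Hc Hlt.
  destruct (continuity_pt_locally_gt (opp_fct f) c (- y0)) as [d [Hd Hball]].
  - now apply continuity_pt_opp.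
  - unfold opp_fct; lra.
  - exists d; split; [exact Hd|]; intros y Hy.
    specialize (Hball y Hy); unfold opp_fct in Hball; lra.
Qed.

Lemma derivable_pt_lim_root_left (f : R -> R) (c l : R) :
  derivable_pt_lim f c l -> 0 < l -> f c = 0 ->
  exists d, 0 < d /\ forall y, c - d < y < c -> f y < 0.
Proof.
  intros Hd Hl Hroot.
  destruct (Hd l Hl) as [d Hquot].
  exists d; split; [apply cond_pos|]; intros y Hy.
  assert (Hy' : Rabs (y - c) < d) by (rewrite Rabs_left; lra).
  specialize (Hquot (y - c) ltac:(lra) Hy').
  replace (c + (y - c)) with y in Hquot by ring.
  rewrite Hroot, Rminus_0_r in Hquot.
  apply Rabs_lt_between in Hquot.
  destruct (Rlt_or_le (f y) 0) as [|Hfy]; [assumption|].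
  assert (f y / (y - c) <= 0); [|lra].
  apply Rmult_le_0_l; [exact Hfy|].
  apply Rlt_le, Rinv_lt_0_compat; lra.
Qed.

(* Let [c] be the supremum of the [t] with [f > 0] on [[a, t]]: [f c < 0] contradicts
   continuity, [f c > 0] the maximality of [c], and [f c = 0] the positivity of [f' c]. *)
Lemma pos_of_derive_pos_at_roots (f df : R -> R) (a b : R) :
  a <= b ->
  (forall x, a <= x <= b -> is_derive f x (df x)) ->
  (forall x, a <= x <= b -> f x = 0 -> 0 < df x) ->
  0 < f a -> 0 < f b.
Proof.
  intros Hab Hder Hroot Ha.
  destruct (Rlt_or_le 0 (f b)) as [|Hb]; [assumption|exfalso].
  set (E := fun t => a <= t <= b /\ forall s, a <= s <= t -> 0 < f s).
  assert (Ea : E a) by (split; [lra|intros s Hs; replace s with a by lra; exact Ha]).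
  destruct (completeness E) as [c [Hub Hlub]].
  { exists b; intros t [Ht _]; lra. }
  { exists a; exact Ea. }
  assert (Hac : a <= c) by (apply Hub, Ea).
  assert (Hcb : c <= b) by (apply Hlub; intros t [Ht _]; lra).
  assert (Hbelow : forall s, a <= s < c -> 0 < f s).
  { intros s Hs; destruct (Rlt_or_le 0 (f s)) as [|Hfs]; [assumption|].
    enough (c <= s) by lra.
    apply Hlub; intros t [Ht Hpos].
    destruct (Rle_or_lt t s) as [|Hst]; [assumption|].
    specialize (Hpos s ltac:(lra)); lra. }
  assert (Hdc : derivable_pt_lim f c (df c)) by (apply is_derive_Reals, Hder; lra).
  assert (Hcont : continuity_pt f c)
    by (apply derivable_continuous_pt; exists (df c); exact Hdc).
  destruct (Rtotal_order (f c) 0) as [Hneg|[Hzero|Hpos]].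
  - assert (Hac' : a < c) by (destruct (Req_dec a c) as [<-|]; lra).
    destruct (continuity_pt_locally_lt f c 0 Hcont Hneg) as [d [Hd Hnear]].
    set (s := Rmax a (c - d / 2)).
    assert (Hs : a <= s < c /\ Rabs (s - c) < d).
    { unfold s; apply Rmax_case_strong; intros; rewrite Rabs_left; lra. }
    specialize (Hbelow s ltac:(lra)); specialize (Hnear s ltac:(lra)); lra.
  - assert (Hac' : a < c) by (destruct (Req_dec a c) as [<-|]; lra).
    destruct (derivable_pt_lim_root_left f c (df c) Hdc) as [d [Hd Hnear]];
      [apply Hroot; lra|exact Hzero|].
    set (s := Rmax a (c - d / 2)).
    assert (Hs : a <= s < c /\ c - d < s) by (unfold s; apply Rmax_case_strong; lra).
    specialize (Hbelow s ltac:(lra)); specialize (Hnear s ltac:(lra)); lra.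
  - assert (Hcb' : c < b) by (destruct (Req_dec c b) as [->|]; lra).
    destruct (continuity_pt_locally_gt f c 0 Hcont Hpos) as [d [Hd Hnear]].
    set (t := Rmin b (c + d / 2)).
    assert (Ht : c < t <= b /\ t < c + d) by (unfold t; apply Rmin_case_strong; lra).
    enough (E t) by (specialize (Hub t ltac:(assumption)); lra).
    split; [lra|]; intros s Hs.
    destruct (Rlt_or_le s c); [apply Hbelow; lra|].
    apply Hnear; rewrite Rabs_right; lra.
Qed.

Lemma exists_pos_Euler_combination (f : R -> R) (a b : R) :
  0 < a -> 0 <= b -> 0 < f 0 -> (forall x, 0 <= x -> ex_derive f x) ->
  exists x, 0 < x /\ 0 < a * f x + b * x * Derive f x.
Proof.
  intros Ha Hb Hf0 Hder.
  assert (Hdlim : forall x, 0 <= x -> derivable_pt_lim f x (Derive f x))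
    by (intros x Hx; apply is_derive_Reals, Derive_correct, Hder, Hx).
  (* By the mean value theorem [x f' x] is a fraction of [f (d / 2) - f 0], so it
     suffices that [f > (1 - theta) f 0] on [[0, d]] with [theta (a + b) = a / 2]. *)
  set (theta := a / (2 * (a + b))).
  assert (Htheta : 0 < theta /\ theta * (a + b) = a / 2)
    by (unfold theta; split; [apply Rdiv_lt_0_compat|field]; lra).
  destruct (continuity_pt_locally_gt f 0 ((1 - theta) * f 0)) as [d [Hd Hnear]].
  { apply derivable_continuous_pt; exists (Derive f 0); apply Hdlim; lra. }
  { nra. }
  destruct (MVT_cor2 f (Derive f) 0 (d / 2)) as [x [Hmvt Hx]];
    [lra|intros; apply Hdlim; lra|].
  exists x; split; [lra|].
  assert (Hfx : (1 - theta) * f 0 < f x) by (apply Hnear; rewrite Rabs_right; lra).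
  assert (Hfd : (1 - theta) * f 0 < f (d / 2)) by (apply Hnear; rewrite Rabs_right; lra).
  set (t := x / (d / 2)).
  assert (Ht : 0 < t < 1).
  { unfold t; split; [apply Rdiv_lt_0_compat; lra|].
    apply Rmult_lt_reg_r with (d / 2); [lra|]; field_simplify; lra. }
  assert (Hslope : x * Derive f x = t * (f (d / 2) - f 0))
    by (unfold t; rewrite Hmvt; field; lra).
  replace (b * x * Derive f x) with (b * (x * Derive f x)) by ring.
  rewrite Hslope.
  assert (Hdrop : - (b * theta * f 0) <= b * (t * (f (d / 2) - f 0))).
  { assert (0 <= b * theta * f 0)
      by (apply Rmult_le_pos; [apply Rmult_le_pos|]; lra).
    destruct (Rle_or_lt 0 (f (d / 2) - f 0)).
    { assert (0 <= b * (t * (f (d / 2) - f 0)))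
        by (apply Rmult_le_pos; [|apply Rmult_le_pos]; lra).
      lra. }
    apply Rle_trans with (b * (f (d / 2) - f 0)); [nra|].
    apply Rmult_le_compat_l; nra. }
  nra.
Qed.

Lemma is_lim_Rpower_p_infty (e : R) :
  0 < e -> is_lim (fun r => Rpower r e) p_infty p_infty.
Proof.
  intros He.
  apply (is_lim_comp exp (fun r => e * ln r) p_infty p_infty p_infty).
  - exact is_lim_exp_p.
  - rewrite <- (is_Rbar_mult_unique e p_infty p_infty) at 2
      by (apply is_Rbar_mult_sym, is_Rbar_mult_p_infty_pos, He).
    apply is_lim_scal_l, is_lim_ln_p.
  - exists 0; intros; discriminate.
Qed.

Lemma vpow_gt0 (v : R -> R) (m r : R) : 0 < vpow v m r.
Proof. apply exp_pos. Qed.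

Lemma Derive_vpow (v : R -> R) (m r : R) :
  0 < v r -> ex_derive v r ->
  Derive (vpow v m) r = m * Derive v r / v r * vpow v m r.
Proof.
  intros Hv Hder; apply is_derive_unique; unfold vpow, Rpower.
  auto_derive; [repeat split; auto; lra|].
  change (Derive (fun x => v x) r) with (Derive v r); field; lra.
Qed.

(* [m alpha < beta (N - 2)] is, after multiplying by [1 - m] and substituting [alpha],
   exactly the lower bound on [beta]. *)
Lemma parameters_subcritical (N m rho alpha beta : R) :
  0 < N -> 0 < m -> m < (N - 2) / N -> 0 < rho ->
  alpha = (2 * beta + rho) / (1 - m) ->
  beta > m * rho / (N - 2 - m * N) ->
  0 < alpha /\ 0 < beta /\ m * alpha < beta * (N - 2).
Proof.
  intros HN Hm Hmn Hrho Halpha Hbeta.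
  assert (Hgap : 0 < N - 2 - m * N).
  { apply Rmult_lt_compat_r with (r := N) in Hmn; [|exact HN].
    unfold Rdiv in Hmn; rewrite Rmult_assoc, Rinv_l in Hmn by lra; lra. }
  assert (Hbgap : m * rho < beta * (N - 2 - m * N)).
  { apply Rmult_lt_compat_r with (r := N - 2 - m * N) in Hbeta; [|exact Hgap].
    unfold Rdiv in Hbeta; rewrite Rmult_assoc, Rinv_l in Hbeta by lra; lra. }
  assert (Hb : 0 < beta) by nra.
  assert (Hm1 : 0 < 1 - m) by nra.
  assert (Ha : alpha * (1 - m) = 2 * beta + rho) by (rewrite Halpha; field; lra).
  split; [nra|split; [exact Hb|]].
  apply Rmult_lt_reg_r with (1 - m); [exact Hm1|]; nra.
Qed.

Section RadialProfile.

Variables (N m alpha beta : R) (v : R -> R).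

Hypothesis m_gt0 : 0 < m.
Hypothesis alpha_gt0 : 0 < alpha.
Hypothesis beta_gt0 : 0 < beta.
Hypothesis m_alpha_lt : m * alpha < beta * (N - 2).
Hypothesis v_gt0 : forall r, 0 <= r -> 0 < v r.
Hypothesis v_derivable : forall r, 0 <= r -> ex_derive v r.
Hypothesis vpow_derivable2 : forall r, 0 < r ->
  ex_derive (vpow v m) r /\ ex_derive (Derive (vpow v m)) r.
Hypothesis radial_eq : forall r, 0 < r ->
  (N - 1) / m * (Derive (Derive (vpow v m)) r + (N - 1) / r * Derive (vpow v m) r)
  + alpha * v r + beta * r * Derive v r = 0.

Local Notation w := (vpow v m).

Definition scaling_term (r : R) : R := alpha * v r + beta * r * Derive v r.

(* Differentiable, unlike [scaling_term]: the equation controls [w''], not [v'']. *)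
Definition scaling_term_vpow (r : R) : R := alpha * w r + beta / m * r * Derive w r.

Lemma vpow_div_gt0 r : 0 <= r -> 0 < w r / v r.
Proof. intros Hr; apply Rdiv_lt_0_compat; [apply vpow_gt0|apply v_gt0, Hr]. Qed.

Lemma scaling_term_vpowE r :
  0 <= r -> scaling_term_vpow r = w r / v r * scaling_term r.
Proof.
  intros Hr; pose proof (v_gt0 r Hr).
  unfold scaling_term_vpow, scaling_term.
  rewrite Derive_vpow by auto; field; lra.
Qed.

Lemma is_derive_scaling_term_vpow r : 0 < r ->
  is_derive scaling_term_vpow r
    (alpha * Derive w r + beta / m * (Derive w r + r * Derive (Derive w) r)).
Proof.
  intros Hr; destruct (vpow_derivable2 r Hr).
  unfold scaling_term_vpow; auto_derive; [repeat split; auto|].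
  change (Derive (fun x => w x) r) with (Derive w r).
  change (Derive (fun x => Derive w x) r) with (Derive (Derive w) r).
  field; lra.
Qed.

(* At a root, the equation forces [w'' = - (N - 1) w' / r] and [w' = - m alpha w / (beta r)],
   so the derivative is [alpha w (beta (N - 2) - m alpha) / (beta r) > 0]. *)
Lemma derive_scaling_term_vpow_pos_at_roots r : 0 < r ->
  scaling_term_vpow r = 0 ->
  0 < alpha * Derive w r + beta / m * (Derive w r + r * Derive (Derive w) r).
Proof.
  intros Hr Hroot.
  pose proof (vpow_gt0 v m r) as Hw.
  assert (Hh : scaling_term r = 0).
  { rewrite scaling_term_vpowE in Hroot by lra.
    destruct (Rmult_integral _ _ Hroot) as [Hq|]; [|assumption].
    pose proof (vpow_div_gt0 r ltac:(lra)); lra. }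
  assert (HN : 2 < N) by nra.
  assert (Hw2 : Derive (Derive w) r = - ((N - 1) / r * Derive w r)).
  { specialize (radial_eq r Hr); unfold scaling_term in Hh.
    assert (Hlap : (N - 1) / m * (Derive (Derive w) r + (N - 1) / r * Derive w r) = 0)
      by lra.
    destruct (Rmult_integral _ _ Hlap) as [Hc|]; [|lra].
    assert (0 < (N - 1) / m) by (apply Rdiv_lt_0_compat; lra); lra. }
  assert (Hw1 : Derive w r = - (m * alpha * w r / (beta * r))).
  { unfold scaling_term_vpow in Hroot.
    apply Rmult_eq_reg_l with (beta / m * r); [|apply Rgt_not_eq, Rmult_lt_0_compat;
      [apply Rdiv_lt_0_compat|]; lra].
    transitivity (- (alpha * w r)); [lra|field; lra]. }
  replace (alpha * Derive w r + beta / m * (Derive w r + r * Derive (Derive w) r))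
    with (alpha * w r * (beta * (N - 2) - m * alpha) / (beta * r))
    by (rewrite Hw2, Hw1; field; lra).
  apply Rdiv_lt_0_compat; [apply Rmult_lt_0_compat; [apply Rmult_lt_0_compat|]|]; nra.
Qed.

Lemma scaling_term_gt0_from xi : 0 < xi -> 0 < scaling_term xi ->
  forall r, xi <= r -> 0 < scaling_term r.
Proof.
  intros Hxi Hh r Hr.
  enough (Hq : 0 < scaling_term_vpow r).
  { rewrite scaling_term_vpowE in Hq by lra.
    pose proof (vpow_div_gt0 r ltac:(lra)); nra. }
  apply (pos_of_derive_pos_at_roots scaling_term_vpow
    (fun x => alpha * Derive w x + beta / m * (Derive w x + x * Derive (Derive w) x)) xi r Hr).
  - intros x Hx; apply is_derive_scaling_term_vpow; lra.
  - intros x Hx; apply derive_scaling_term_vpow_pos_at_roots; lra.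
  - rewrite scaling_term_vpowE by lra.
    apply Rmult_lt_0_compat; [apply vpow_div_gt0; lra|exact Hh].
Qed.

Lemma scaling_term_eventually_gt0 :
  exists xi, 0 < xi /\ forall r, xi <= r -> 0 < scaling_term r.
Proof.
  destruct (exists_pos_Euler_combination v alpha beta) as [xi [Hxi Hh]];
    [lra|lra|apply v_gt0; lra|exact v_derivable|].
  exists xi; split; [exact Hxi|]; exact (scaling_term_gt0_from xi Hxi Hh).
Qed.

Lemma self_similar_profile_increasing xi : 0 < xi ->
  (forall r, xi <= r -> 0 < scaling_term r) ->
  forall r, xi <= r -> Rpower xi (alpha / beta) * v xi <= Rpower r (alpha / beta) * v r.
Proof.
  intros Hxi Hh r Hr.
  destruct (Req_dec xi r) as [->|Hne]; [apply Rle_refl|].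
  apply Rlt_le, (incr_function_le (fun x => Rpower x (alpha / beta) * v x) xi p_infty
    (fun x => Rpower x (alpha / beta) / (beta * x) * scaling_term x)); simpl; try lra.
  - intros x Hx _; unfold Rpower, scaling_term; auto_derive.
    + repeat split; [lra|apply v_derivable; lra].
    + change (Derive (fun y => v y) x) with (Derive v x); field; lra.
  - intros x Hx _; apply Rmult_lt_0_compat; [|apply Hh; lra].
    apply Rdiv_lt_0_compat; [apply exp_pos|nra].
Qed.

Lemma radial_profile_growth :
  is_lim (fun r => Rpower r (N - 2) * Rpower (v r) m) p_infty p_infty.
Proof.
  destruct scaling_term_eventually_gt0 as [xi [Hxi Hh]].
  set (g := Rpower xi (alpha / beta) * v xi).
  assert (Hg : 0 < g) by (apply Rmult_lt_0_compat; [apply exp_pos|apply v_gt0; lra]).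
  set (e := N - 2 - m * (alpha / beta)).
  assert (He : 0 < e).
  { unfold e; apply Rlt_0_minus; apply Rmult_lt_reg_r with beta; [lra|].
    replace (m * (alpha / beta) * beta) with (m * alpha) by (field; lra); lra. }
  apply (is_lim_le_p_loc (fun r => Rpower g m * Rpower r e)).
  - exists xi; intros r Hr.
    assert (Hv : 0 < v r) by (apply v_gt0; lra).
    replace (Rpower r (N - 2) * Rpower (v r) m)
      with (Rpower (Rpower r (alpha / beta) * v r) m * Rpower r e).
    + apply Rmult_le_compat_r; [apply Rlt_le, exp_pos|].
      apply Rle_Rpower_l; [lra|split; [exact Hg|]].
      apply self_similar_profile_increasing; [lra|exact Hh|lra].
    + rewrite <- Rpower_mult_distr, Rpower_mult by (try apply exp_pos; lra).
      replace (N - 2) with (alpha / beta * m + e) by (unfold e; ring).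
      rewrite Rpower_plus; ring.
  - rewrite <- (is_Rbar_mult_unique (Rpower g m) p_infty p_infty) at 2
      by (apply is_Rbar_mult_sym, is_Rbar_mult_p_infty_pos, exp_pos).
    apply is_lim_scal_l, is_lim_Rpower_p_infty, He.
Qed.

End RadialProfile.

Theorem lemma3p2 (n : nat) (m rho alpha beta eta : R) (v : R -> R) :
  (3 <= n)%nat ->
  0 < m -> m < (INR n - 2) / INR n ->
  0 < rho ->
  alpha = (2 * beta + rho) / (1 - m) ->
  beta > m * rho / (INR n - 2 - m * INR n) ->
  alpha > INR n * beta ->
  0 < eta ->
  radial_solution n m alpha beta eta v ->
  is_lim (fun r => r ^ (n - 2) * Rpower (v r) m) p_infty p_infty.
Proof.
  intros Hn Hm Hmn Hrho Halpha Hbeta _ _ [Hpos [_ [Hdv [_ [Hdw Hode]]]]].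
  assert (HN : 0 < INR n) by (apply lt_0_INR; lia).
  destruct (parameters_subcritical (INR n) m rho alpha beta) as [Ha [Hb Hsub]]; auto.
  apply (is_lim_ext_loc (fun r => Rpower r (INR n - 2) * Rpower (v r) m)).
  - exists 0; intros r Hr.
    rewrite <- Rpower_pow by lra; rewrite minus_INR by lia; reflexivity.
  - now apply (radial_profile_growth (INR n) m alpha beta v).
Qed.
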